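(* Let $r\ge1$ be an integer and let $G$ be an $(r+1)$-path degenerate graph. If $G$ is a forest, then $\mathrm{arb}_r(G)=1$; otherwise $\mathrm{arb}_r(G)=r+1$.
   Context: Graphs are finite and simple. For an integer $r\ge1$, the generalized $r$-arboricity $\mathrm{arb}_r(G)$ is the minimum number of colors in a (not necessarily proper) coloring of the edges of $G$ such that every cycle $C$ of $G$ receives at least $\min\{|C|,r+1\}$ distinct colors ($|C|$ being the length of $C$). A strict ear of a graph $G$ is a path of $G$ whose internal vertices all have degree $2$ in $G$ and whose two endpoints are distinct. For an integer $p\ge1$, a $p$-reduction of $G$ is the deletion of either an isolated vertex, or a vertex of degree $1$, or the internal vertices of a strict ear of $G$ of length at least $p$. A graph is $p$-path degenerate if it can be reduced to the empty graph by a sequence of $p$-reductions. *)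

From mathcomp Require Import all_boot.
Set Implicit Arguments. Unset Strict Implicit. Unset Printing Implicit Defensive.

(* A simple graph on a finite vertex type T: symmetric irreflexive relation e.
   Subgraphs arising from reductions are the induced subgraphs G[V], V : {set T}. *)
Definition simple_graph (T : finType) (e : rel T) : Prop :=
  symmetric e /\ irreflexive e.

Section Graphs.
Variables (T : finType) (e : rel T).

Definition deg (V : {set T}) (x : T) : nat := #|[set y in V | e x y]|.

(* Its edges are
   {x, next c x} for x in c, and its length is size c. *)
Definition is_cycle (V : {set T}) (c : seq T) : Prop :=
  [/\ uniq c, 3 <= size c, all (fun x => x \in V) c & cycle e c].

Definition cycle_colors (k : nat) (col : {set T} -> 'I_k) (c : seq T) : {set 'I_k} :=
  [set col [set x; next c x] | x in c].

(* col is an edge-coloring with colors in 'I_k (edges are 2-element vertex sets;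
   values on non-edges are irrelevant) such that every cycle C receives at least
   min(|C|, r+1) colors *)
Definition good_coloring (r : nat) (V : {set T}) (k : nat) (col : {set T} -> 'I_k) : Prop :=
  forall c, is_cycle V c -> minn (size c) r.+1 <= #|cycle_colors col c|.

Definition r_colorable (r : nat) (V : {set T}) (k : nat) : Prop :=
  exists col : {set T} -> 'I_k, good_coloring r V col.

Definition arb_is (r : nat) (V : {set T}) (k : nat) : Prop :=
  r_colorable r V k /\ forall k', r_colorable r V k' -> k <= k'.

Definition forest (V : {set T}) : Prop := forall c, ~ is_cycle V c.

(* strict ear of G[V]: path a, m_1, ..., m_j, b of distinct vertices of V,
   consecutive ones adjacent, internal vertices m of degree 2 in G[V];
   its length is j+1 = (size m).+1 *)
Definition strict_ear (V : {set T}) (a : T) (m : seq T) (b : T) : Prop :=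
  [/\ path e a (rcons m b), uniq (a :: rcons m b),
      all (fun x => x \in V) (a :: rcons m b)
    & all (fun x => deg V x == 2) m].

Inductive p_reduction (p : nat) (V : {set T}) : {set T} -> Prop :=
  | red_isolated v : v \in V -> deg V v = 0 -> p_reduction p V (V :\ v)
  | red_leaf v : v \in V -> deg V v = 1 -> p_reduction p V (V :\ v)
  | red_ear a m b : strict_ear V a m b -> p <= (size m).+1 ->
      p_reduction p V (V :\: [set x in m]).

Inductive path_degenerate (p : nat) : {set T} -> Prop :=
  | pd_empty : path_degenerate p set0
  | pd_step V W : p_reduction p V W -> path_degenerate p W -> path_degenerate p V.

End Graphs.

From mathcomp Require Import all_boot.
Set Implicit Arguments. Unset Strict Implicit. Unset Printing Implicit Defensive.

(* Upper bound: induct along the reduction sequence. Deleting a vertex of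
   degree at most one destroys no cycle. A cycle through an internal vertex of
   a strict ear runs along the whole ear, so colouring the first r+1 edges of an
   ear of length >= r+1 with pairwise distinct colours gives every such cycle all
   r+1 colours, while the other cycles keep their colours.
   Lower bound: by the same dichotomy, a cycle either survives a reduction or
   contains a whole ear of length >= r+1, so a graph with a cycle has a cycle of
   length > r, which needs r+1 colours. *)

Lemma prev_next_neq (T : eqType) (c : seq T) u :
  uniq c -> 2 < size c -> u \in c -> prev c u != next c u.
Proof.
move=> Uc Sc uc; case: (rot_to uc) => i s Hr.
have Us : uniq (u :: s) by rewrite -Hr rot_uniq.
have Ss : 2 < size (u :: s) by rewrite -Hr size_rot.
apply/eqP => Hpn.
have : next c (next c u) = u by rewrite -{1}Hpn next_prev.
rewrite -!(next_rot i Uc) Hr.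
move: Us Ss; case: s {Hr} => [|v [|w t]] //=.
rewrite !inE => /andP [/norP [uv /norP [uw _]] _] _.
rewrite /next /= eqxx eq_sym (negbTE uv) eqxx => wu.
by rewrite wu eqxx in uw.
Qed.

Lemma step_eq_const (P : pred nat) n :
  (forall j, j.+1 < n -> P j = P j.+1) -> forall i, i < n -> P i = P 0.
Proof.
move=> Pstep; elim=> [//|i IH] lt_in.
by rewrite -Pstep // IH // ltnW.
Qed.

Section Cycles.
Variables (T : finType) (e : rel T).
Hypothesis e_sym : symmetric e.

Definition nbhd (V : {set T}) (x : T) : {set T} := [set y in V | e x y].

Lemma degE V x : deg e V x = #|nbhd V x|.
Proof. by []. Qed.

Lemma is_cycle_set0 c : ~ is_cycle e set0 c.
Proof. by case: c => [|x c] [_ //= _ /andP []]; rewrite inE. Qed.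

Lemma is_cycle_subset (V W : {set T}) c :
  W \subset V -> is_cycle e W c -> is_cycle e V c.
Proof.
move=> /subsetP sWV [Uc Sc /allP Ac Cc]; split=> //.
by apply/allP => x /Ac /sWV.
Qed.

Lemma is_cycle_setD (V X : {set T}) c :
  is_cycle e V c -> {in c, forall x, x \notin X} -> is_cycle e (V :\: X) c.
Proof.
case=> Uc Sc /allP Ac Cc cX; split=> //.
by apply/allP => x xc; rewrite inE cX // Ac.
Qed.

Lemma cycle_next_prev_nbhd V c u : is_cycle e V c -> u \in c ->
  next c u \in nbhd V u /\ prev c u \in nbhd V u.
Proof.
case=> Uc _ /allP Ac Cc uc; rewrite !inE.
by rewrite !Ac ?mem_next ?mem_prev // next_cycle // e_sym prev_cycle.
Qed.

Lemma cycle_deg_ge2 V c u : is_cycle e V c -> u \in c -> 1 < deg e V u.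
Proof.
move=> Hc uc; have [Hn Hp] := cycle_next_prev_nbhd Hc uc.
case: Hc => Uc Sc _ _.
have <- : #|[set prev c u; next c u]| = 2 by rewrite cards2 prev_next_neq.
by apply: subset_leq_card; apply/subsetP => w /set2P [] ->.
Qed.

Lemma is_cycle_setD1_low_deg V c v : deg e V v <= 1 ->
  is_cycle e V c -> is_cycle e (V :\ v) c.
Proof.
move=> dv Hc; apply: (is_cycle_setD Hc) => x xc; rewrite inE.
by apply: contraTN dv => /eqP <-; rewrite -ltnNge; apply: cycle_deg_ge2 Hc xc.
Qed.

Lemma cycle_deg2_nbhd V c u : is_cycle e V c -> u \in c -> deg e V u = 2 ->
  nbhd V u = [set next c u; prev c u].
Proof.
move=> Hc uc du; have [Hn Hp] := cycle_next_prev_nbhd Hc uc.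
case: Hc => Uc Sc _ _; apply/esym/eqP.
rewrite eqEcard cards2 eq_sym prev_next_neq // -degE du leqnn andbT.
by apply/subsetP => w /set2P [] ->.
Qed.

Lemma cycle_deg2_nbhd_mem V c u w : is_cycle e V c -> u \in c -> deg e V u = 2 ->
  w \in nbhd V u -> w \in c.
Proof.
move=> Hc uc du; rewrite (cycle_deg2_nbhd Hc uc du).
by case/set2P => ->; rewrite ?mem_next ?mem_prev.
Qed.

Lemma cycle_deg2_edge V c u w : is_cycle e V c -> u \in c -> deg e V u = 2 ->
  w \in nbhd V u -> exists2 x, x \in c & [set x; next c x] = [set u; w].
Proof.
move=> Hc uc du; rewrite (cycle_deg2_nbhd Hc uc du).
case: (Hc) => Uc _ _ _; case/set2P => ->; first by exists u.
by exists (prev c u); rewrite ?mem_prev // next_prev // setUC.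
Qed.

Section Ear.
Variables (V : {set T}) (a : T) (m : seq T) (b : T).
Hypothesis ear : strict_ear e V a m b.

Let s := a :: rcons m b.

Lemma ear_size : size s = (size m).+2.
Proof. by rewrite /= size_rcons. Qed.

Lemma ear_uniq : uniq s.
Proof. by case: ear. Qed.

Lemma ear_index k : k < (size m).+2 -> index (nth a s k) s = k.
Proof. by move=> lt_k; rewrite index_uniq ?ear_size ?ear_uniq. Qed.

Lemma ear_internal j : j < size m -> nth a s j.+1 = nth a m j.
Proof. by move=> lt_j; rewrite /= nth_rcons lt_j. Qed.

Lemma ear_internal_deg x : x \in m -> deg e V x = 2.
Proof. by case: ear => _ _ _ /allP Hd /Hd /eqP. Qed.

Lemma ear_nbhd k : k <= size m ->
  nth a s k.+1 \in nbhd V (nth a s k) /\ nth a s k \in nbhd V (nth a s k.+1).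
Proof.
case: ear => /(pathP a) Hp _ /allP Hs _ le_k.
have inV i : i < (size m).+2 -> nth a s i \in V.
  by move=> lt_i; apply: Hs; rewrite mem_nth // ear_size.
have Hk : e (nth a s k) (nth a s k.+1) by apply: Hp; rewrite size_rcons.
rewrite !inE !inV ?ltnS ?(leqW le_k) //=.
by split; last rewrite e_sym.
Qed.

Lemma ear_edge_internal_end k : 0 < size m -> k <= size m ->
  exists u w, [/\ [set nth a s k; nth a s k.+1] = [set u; w], u \in m & w \in nbhd V u].
Proof.
move=> m_gt0 le_k; have [Hfw Hbw] := ear_nbhd le_k.
case: (ltnP k (size m)) => [lt_k | ge_k].
  exists (nth a s k.+1), (nth a s k); rewrite setUC ear_internal // mem_nth //.
  by rewrite -ear_internal.
have Ek : k = (size m).-1.+1 by rewrite prednK //; apply/eqP; rewrite eqn_leq le_k.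
exists (nth a s k), (nth a s k.+1); split=> //.
by rewrite Ek ear_internal ?mem_nth // -Ek.
Qed.

Section CycleThroughEar.
Variables (c : seq T) (x : T).
Hypotheses (Hc : is_cycle e V c) (xc : x \in c) (xm : x \in m).

Lemma cycle_ear_internal : {subset m <= c}.
Proof.
have Hstep j : j.+1 < size m -> (nth a m j \in c) = (nth a m j.+1 \in c).
  move=> lt_j; have [Hfw Hbw] := ear_nbhd (ltnW lt_j).
  rewrite !ear_internal ?(ltnW lt_j) // in Hfw Hbw.
  have dj := ear_internal_deg (mem_nth a (ltnW lt_j)).
  have dj1 := ear_internal_deg (mem_nth a lt_j).
  apply/idP/idP => ?; first exact: cycle_deg2_nbhd_mem Hc _ dj Hfw.
  exact: cycle_deg2_nbhd_mem Hc _ dj1 Hbw.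
have const := step_eq_const Hstep.
move=> y ym; rewrite -(nth_index a ym) const ?index_mem //.
by rewrite -(const (index x m)) ?index_mem ?nth_index.
Qed.

Lemma cycle_ear_edge k : k <= size m ->
  exists2 y, y \in c & [set y; next c y] = [set nth a s k; nth a s k.+1].
Proof.
have m_gt0 : 0 < size m by case: (m) xm.
move=> le_k; have [u [w [-> um wu]]] := ear_edge_internal_end m_gt0 le_k.
exact: cycle_deg2_edge Hc (cycle_ear_internal um) (ear_internal_deg um) wu.
Qed.

Lemma cycle_ear_size : (size m).+2 <= size c.
Proof.
have edge_mem k : k <= size m -> nth a s k \in c /\ nth a s k.+1 \in c.
  move=> /cycle_ear_edge [y yc Ey].
  have in_edge z : z \in [set y; next c y] -> z \in c.
    by case/set2P => ->; rewrite ?mem_next.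
  by rewrite !in_edge // Ey !inE eqxx ?orbT.
rewrite -ear_size; apply: uniq_leq_size ear_uniq _ => y ys.
rewrite -(nth_index a ys); move: (index_mem y s); rewrite ys ear_size ltnS.
case: (ltnP (index y s) (size m).+1) => [lt_i _ | ge_i le_i].
  by case: (edge_mem _ lt_i).
have -> : index y s = (size m).+1 by apply/eqP; rewrite eqn_leq le_i.
by case: (edge_mem _ (leqnn _)).
Qed.

End CycleThroughEar.

(* Edge [s_k; s_(k+1)] of the ear has maximal index k+1, so it gets colour k;
   for k > r, [inord] returns an arbitrary colour. *)
Lemma good_coloring_ear r (col : {set T} -> 'I_r.+1) :
  r < (size m).+1 -> good_coloring e r (V :\: [set x in m]) col ->
  exists col' : {set T} -> 'I_r.+1, good_coloring e r V col'.
Proof.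
move=> long Hcol.
pose col' (S : {set T}) := if [exists x in S, x \in m]
  then inord (\max_(x in S) index x s).-1 else col S.
exists col' => c Hc; case: (boolP (has (mem m) c)) => [/hasP [x xc xm] | /hasPn cm].
  suff -> : cycle_colors col' c = setT by rewrite cardsT card_ord geq_minr.
  apply/eqP; rewrite eqEsubset subsetT; apply/subsetP => k _.
  have le_k : k <= size m by rewrite -ltnS (leq_trans (ltn_ord k)).
  have [y yc Ey] := cycle_ear_edge Hc xc xm le_k.
  apply/imsetP; exists y; rewrite // Ey.
  have m_gt0 : 0 < size m by case: (m) xm.
  have [u [w [Ek um _]]] := ear_edge_internal_end m_gt0 le_k.
  rewrite /col' ifT; last by apply/existsP; exists u; rewrite Ek !inE eqxx um.
  have neq : nth a s k != nth a s k.+1.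
    by rewrite nth_uniq ?ear_uniq ?ear_size ?ltnS ?(leqW le_k) // neq_ltn ltnSn.
  rewrite big_setU1 ?inE // big_set1 !ear_index; last 2 first.
  - by rewrite !ltnS.
  - by rewrite ltnS leqW.
  by apply: val_inj; rewrite /= (maxn_idPr (leqnSn k)) inordK ?ltn_ord.
have cmD : {in c, forall y, y \notin [set z in m]} by move=> y /cm; rewrite inE.
suff -> : cycle_colors col' c = cycle_colors col c by apply/Hcol/is_cycle_setD.
apply: eq_in_imset => x xc; rewrite /col' ifF //; apply/negbTE/existsP.
have nxc : next c x \in c by rewrite mem_next.
by case=> y /andP [/set2P [] -> ym]; [move: (cm x xc) | move: (cm _ nxc)]; move/negP.
Qed.

End Ear.

Lemma p_reduction_subset p V W : p_reduction e p V W -> W \subset V.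
Proof. by case=> *; apply: subsetDl. Qed.

Lemma p_reduction_cycle p V W c : p_reduction e p V W -> is_cycle e V c ->
  is_cycle e W c \/ p < size c.
Proof.
case=> [v _ dv | v _ dv | a m b Hear long] Hc;
  try by left; apply: is_cycle_setD1_low_deg Hc; rewrite dv.
case: (boolP (has (mem m) c)) => [/hasP [x xc xm] | /hasPn cm].
  by right; rewrite (leq_trans _ (cycle_ear_size Hear Hc xc xm)) // ltnS.
by left; apply: is_cycle_setD Hc _ => x /cm; rewrite inE.
Qed.

Lemma path_degenerate_long_cycle p V c : path_degenerate e p V ->
  is_cycle e V c -> exists2 c', is_cycle e V c' & p < size c'.
Proof.
move=> pd; elim: pd c => [|{}V W red _ IH] c Hc.
  by case: (is_cycle_set0 Hc).
case: (p_reduction_cycle red Hc) => [HcW | long]; last by exists c.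
have [c' Hc' long] := IH c HcW.
by exists c'; first exact: is_cycle_subset (p_reduction_subset red) Hc'.
Qed.

Lemma path_degenerate_colorable r V : path_degenerate e r.+1 V ->
  r_colorable e r V r.+1.
Proof.
elim=> [|{}V W red _ [col Hcol]].
  by exists (fun _ => ord0) => c /is_cycle_set0.
case: red Hcol => [v _ dv | v _ dv | a m b Hear long] Hcol.
3: exact: (good_coloring_ear Hear long Hcol).
all: by exists col => c Hc; apply/Hcol/(is_cycle_setD1_low_deg _ Hc); rewrite dv.
Qed.

Lemma r_colorable_long_cycle r V k c : is_cycle e V c -> r < size c ->
  r_colorable e r V k -> r < k.
Proof.
move=> Hc long [col Hcol]; have := Hcol c Hc; rewrite (minn_idPr long).
by move/leq_trans; apply; rewrite -[k in _ <= k]card_ord max_card.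
Qed.

End Cycles.

Theorem mainTheorem10 (T : finType) (e : rel T) (r : nat) :
  simple_graph e -> 1 <= r ->
  path_degenerate e r.+1 [set: T] ->
  (forest e [set: T] -> arb_is e r [set: T] 1) /\
  (~ forest e [set: T] -> arb_is e r [set: T] r.+1).
Proof.
move=> [e_sym _] _ pd; split=> [acyclic | cyclic].
  split=> [|k [col _]]; first by exists (fun _ => ord0) => c /acyclic.
  exact: leq_ltn_trans (leq0n _) (ltn_ord (col set0)).
split=> [|k col_k]; first exact: path_degenerate_colorable.
(* The goal is boolean, so a cycle can be extracted from [~ forest] constructively. *)
apply: contraT => /negP not_lt; case: cyclic => c Hc; apply: not_lt.
have [c' Hc' long] := path_degenerate_long_cycle e_sym pd Hc.
exact: r_colorable_long_cycle Hc' (ltnW long) col_k.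
Qed.
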